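(* Multiplication (the ternary relation $w=xy$) is uniformly positive existentially definable: (1) over the language $\{0,1,+,R\}$ in the class $\mathcal{N}=\{\mathfrak{N}_p : p \text{ prime}\}$; (2) over the language $\{0,1,+,\mathrm{pos},R\}$ in the class $\mathcal{Z}=\{\mathfrak{Z}_p : p\text{ prime}\}$; (3) over the language $\{0,1,+,\mid,R,T\}$ in the class $\mathcal{D}=\{\mathfrak{D}_p : p\text{ prime}\}$. That is, in each case there is one positive existential formula $\mu(x,y,w)$ of the given language defining $w=xy$ in every structure of the class.
   Context: For a prime $p$, $x\mid_p y$ on $\mathbb{Z}$ means there exists $s\in\mathbb{Z}$ with $y=\pm x p^s$ (same symbol for its restriction to $\mathbb{N}$; $\mathbb{N}$ contains $0$). $\mathfrak{N}_p=(\mathbb{N};0,1,+,\mid_p)$ with $R$ interpreted as $\mid_p$. $\mathfrak{Z}_p=(\mathbb{Z};0,1,+,\mathrm{pos},\mid_p)$ where the unary relation $\mathrm{pos}(x)$ means $x\geq 0$ and $R$ is $\mid_p$. $\mathfrak{D}_p=(\mathbb{Z};0,1,+,\mid,\mid_p,\mathbb{Z}\smallsetminus\{-1,0,1\})$, where $\mid$ is ordinary divisibility, $R$ is $\mid_p$, and the unary predicate $T$ is interpreted as $\mathbb{Z}\smallsetminus\{-1,0,1\}$. *)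

From Stdlib Require Import ZArith Znumtheory.
Open Scope Z_scope.

(* Variables are de Bruijn-style indices; [tvar 0], [tvar 1], [tvar 2]
   are the free variables x, y, w of the defining formula. *)
Inductive term : Type :=
| tvar (n : nat)
| tzero
| tone
| tadd (a b : term).

(* Positive existential formulas with unary relation symbols from [U]
   and binary relation symbols from [B]: atoms (equalities and relational
   atoms), conjunction, disjunction, existential quantification.
   [Fex f] binds variable index 0 in [f] (other indices shift by one). *)
Inductive pef (U B : Type) : Type :=
| Feq (a b : term)
| Fun (u : U) (a : term)
| Fbin (r : B) (a b : term)
| Fand (f g : pef U B)
| For (f g : pef U B)
| Fex (f : pef U B).
Arguments Feq {U B}.
Arguments Fun {U B}.
Arguments Fbin {U B}.
Arguments For {U B}.
Arguments Fand {U B}.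
Arguments Fex {U B}.

Definition scons {M : Type} (a : M) (e : nat -> M) : nat -> M :=
  fun n => match n with O => a | S m => e m end.

Fixpoint eval_term {M : Type} (z o : M) (add : M -> M -> M)
  (e : nat -> M) (t : term) : M :=
  match t with
  | tvar n => e n
  | tzero => z
  | tone => o
  | tadd a b => add (eval_term z o add e a) (eval_term z o add e b)
  end.

Fixpoint sat {M U B : Type} (z o : M) (add : M -> M -> M)
  (iu : U -> M -> Prop) (ib : B -> M -> M -> Prop)
  (e : nat -> M) (f : pef U B) : Prop :=
  match f with
  | Feq a b => eval_term z o add e a = eval_term z o add e b
  | Fun u a => iu u (eval_term z o add e a)
  | Fbin r a b => ib r (eval_term z o add e a) (eval_term z o add e b)
  | Fand f g => sat z o add iu ib e f /\ sat z o add iu ib e g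
  | For f g => sat z o add iu ib e f \/ sat z o add iu ib e g
  | Fex f => exists a : M, sat z o add iu ib (scons a e) f
  end.

(* On Z: x |_p y iff y = +- x p^s for some integer s.  Splitting s >= 0
   and s < 0 gives the four cases below. *)
Definition divp (p x y : Z) : Prop :=
  exists k : nat,
    y = x * p ^ Z.of_nat k \/ y = - (x * p ^ Z.of_nat k) \/
    x = y * p ^ Z.of_nat k \/ x = - (y * p ^ Z.of_nat k).

Definition divpN (p : Z) (x y : nat) : Prop := divp p (Z.of_nat x) (Z.of_nat y).

Inductive symR : Type := sym_R.
Inductive symPos : Type := sym_pos.
Inductive symT : Type := sym_T.
Inductive symD : Type := sym_div | sym_RD.

Definition formN := pef Empty_set symR.
Definition formZ := pef symPos symR.
Definition formD := pef symT symD.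

Definition satN (p : Z) (e : nat -> nat) (f : formN) : Prop :=
  sat 0%nat 1%nat Nat.add
    (fun (u : Empty_set) (_ : nat) => match u return Prop with end)
    (fun _ x y => divpN p x y) e f.

Definition satZ (p : Z) (e : nat -> Z) (f : formZ) : Prop :=
  sat 0 1 Z.add
    (fun _ x => 0 <= x)
    (fun _ x y => divp p x y) e f.

Definition satD (p : Z) (e : nat -> Z) (f : formD) : Prop :=
  sat 0 1 Z.add
    (fun _ x => ~ (x = -1 \/ x = 0 \/ x = 1))
    (fun r x y => match r with
                  | sym_div => Z.divide x y
                  | sym_RD => divp p x y
                  end) e f.

(* In N_p, [1 |_p u], [x |_p w], [x + 1 |_p w + u] and [x <= w] force [w = x u] when [x] is
   prime to [p]; as one of [x], [x + 1] is prime to [p], multiplication by powers of [p] is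
   definable.  With them, "[v = u^j] for some
   [j = k (mod u - 1)]" is definable through the geometric sum [(u^j - 1)/(u - 1)], which is [j]
   modulo [u - 1].  Multiplication is then read off exponents: [w = (u^x)^y = u^(x y)], and [x y]
   is recovered modulo [u - 1] for a large power [u] of [p].  In Z_p the same formula, with
   quantifiers relativized to [pos], handles absolute values, and signs are split by cases.
   In D_p the squares of [+-p^a] are definable from [|] and [|_p], and [y = x^2] iff
   [x - u | y - u^2] for a large such [u], which exists by Euler's theorem; then
   [2 x y = (x + y)^2 - x^2 - y^2]. *)

From Stdlib Require Import ZArith Znumtheory Lia Setoid.
From mathcomp Require all_boot cyclic.

Module EulerNat.
Import all_boot cyclic.

Lemma expn_Natpow a k : expn a k = Nat.pow a k.
Proof. by elim: k => [|k IH] //=; rewrite expnS IH. Qed.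

Lemma exists_pow_sub_one_dvdn (a n : nat) : (0 < a)%coq_nat -> (0 < n)%coq_nat ->
  (forall d, Nat.divide d a -> Nat.divide d n -> d = 1%nat) ->
  exists k, (0 < k)%coq_nat /\ (1 <= Nat.pow a k)%coq_nat /\ Nat.divide n (Nat.pow a k - 1)%nat.
Proof.
move=> /ltP a_gt0 /ltP n_gt0 coprime_an.
have co_an : coprime a n.
  by apply/eqP/coprime_an; apply/dvdnP; [exact: dvdn_gcdl | exact: dvdn_gcdr].
have : a ^ totient n == 1 %[mod n] by apply/eqP; exact: Euler_exp_totient.
rewrite eqn_mod_dvd ?expn_gt0 ?a_gt0 // => /dvdnP [q Hq].
exists (totient n); rewrite -expn_Natpow; split; [|split].
- by apply/ltP; rewrite totient_gt0.
- by apply/leP; rewrite expn_gt0 a_gt0.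
- by exists q.
Qed.

End EulerNat.

Definition ppow (p : Z) (k : nat) : Z := p ^ Z.of_nat k.

Lemma ppow_0 p : ppow p 0 = 1.
Proof. reflexivity. Qed.

Lemma ppow_succ p k : ppow p (S k) = p * ppow p k.
Proof. unfold ppow. rewrite Nat2Z.inj_succ, Z.pow_succ_r; lia. Qed.

Lemma ppow_add p a b : ppow p (a + b) = ppow p a * ppow p b.
Proof. unfold ppow. rewrite Nat2Z.inj_add, Z.pow_add_r; lia. Qed.

Lemma ppow_mul p m j : ppow p (m * j) = ppow p m ^ Z.of_nat j.
Proof. unfold ppow. rewrite Nat2Z.inj_mul, Z.pow_mul_r; lia. Qed.

Lemma ppow_pos p k : 0 < p -> 0 < ppow p k.
Proof. intros. unfold ppow. apply Z.pow_pos_nonneg; lia. Qed.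

Lemma ppow_ge_base p k : 2 <= p -> (1 <= k)%nat -> p <= ppow p k.
Proof.
  intros Hp Hk. destruct k as [|k]; [lia|].
  rewrite ppow_succ. pose proof (ppow_pos p k). nia.
Qed.

Lemma ppow_double_lt p a b : 2 <= p -> (a < b)%nat -> 2 * ppow p a <= ppow p b.
Proof.
  intros Hp Hab. replace b with (S (b - S a) + a)%nat by lia.
  rewrite ppow_add. pose proof (ppow_ge_base p (S (b - S a)) Hp). pose proof (ppow_pos p a). nia.
Qed.

Lemma ppow_gt_index p k : 2 <= p -> Z.of_nat k < ppow p k.
Proof. intros Hp. induction k; [reflexivity|]. rewrite ppow_succ, Nat2Z.inj_succ. nia. Qed.

Lemma ppow_nat p k : 0 < p -> exists n : nat, Z.of_nat n = ppow p k.
Proof. intros. exists (Z.to_nat (ppow p k)). pose proof (ppow_pos p k). lia. Qed.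

Lemma divp_abs p x y : 0 < p ->
  divp p x y <-> exists k, Z.abs y = Z.abs x * ppow p k \/ Z.abs x = Z.abs y * ppow p k.
Proof.
  intros Hp. unfold divp, ppow. split; intros [k Hk]; exists k;
    pose proof (ppow_pos p k Hp) as Hk0; unfold ppow in Hk0.
  - destruct Hk as [H|[H|[H|H]]]; subst; [left|left|right|right];
      rewrite ?Z.abs_opp, Z.abs_mul, (Z.abs_eq (p ^ _)); lia.
  - destruct Hk as [H|H]; [|right; right]; lia.
Qed.

Lemma divp_one p u : 0 < p -> divp p 1 u -> exists a, Z.abs u = ppow p a.
Proof.
  intros Hp H. apply (divp_abs p 1 u Hp) in H as [k [H|H]]; [exists k; lia|].
  exists 0%nat. pose proof (ppow_pos p k Hp). rewrite ppow_0. nia.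
Qed.

Lemma divp_of_abs p x y k : 0 < p -> Z.abs y = Z.abs x * ppow p k -> divp p x y.
Proof. intros Hp H. apply divp_abs; [exact Hp|]. exists k. left. exact H. Qed.

Lemma divp_divide p x y : 0 < p -> x <> 0 -> (x | y) -> divp p x y ->
  exists k, Z.abs y = Z.abs x * ppow p k.
Proof.
  intros Hp Hx Hxy H. apply (divp_abs p x y Hp) in H as [k [H|H]]; [exists k; exact H|].
  exists 0%nat. rewrite ppow_0. pose proof (ppow_pos p k Hp).
  assert (Hy : y <> 0) by (intros ->; lia).
  apply Z.divide_abs_l, Z.divide_abs_r, Z.divide_pos_le in Hxy; nia.
Qed.

Lemma base_divide_ppow p k : (1 <= k)%nat -> (p | ppow p k).
Proof. intros Hk. destruct k as [|k]; [lia|]. rewrite ppow_succ. apply Z.divide_factor_l. Qed.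

Lemma prime_ndivide_add_unit p a s : prime p -> (p | a) -> Z.abs s = 1 -> ~ (p | a + s).
Proof.
  intros Hp Ha Hs Has. assert (Hd : (p | s)).
  { replace s with (a + s - a) by ring. apply Z.divide_sub_r; assumption. }
  apply Z.divide_abs_r in Hd. rewrite Hs in Hd. apply Z.divide_1_r in Hd.
  apply prime_ge_2 in Hp. lia.
Qed.

Lemma ppow_coprime_cancel p a r X Y : prime p -> ~ (p | X) -> ~ (p | Y) ->
  ppow p a * X = ppow p r * Y -> X = Y.
Proof.
  intros Hp. pose proof (prime_ge_2 p Hp).
  assert (Hle : forall a r X Y, (a <= r)%nat -> ~ (p | X) -> ppow p a * X = ppow p r * Y -> X = Y).
  { intros a' r' X' Y' Har HX HXY.
    replace r' with (a' + (r' - a'))%nat in HXY by lia. rewrite ppow_add in HXY.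
    assert (HX' : X' = ppow p (r' - a') * Y').
    { apply (Z.mul_reg_l _ _ (ppow p a')); [pose proof (ppow_pos p a'); lia | lia]. }
    destruct (r' - a')%nat as [|c]; [rewrite HX', ppow_0; ring|].
    exfalso. apply HX. rewrite HX'. apply Z.divide_mul_l, base_divide_ppow. lia. }
  intros HX HY HXY. destruct (Nat.le_ge_cases a r).
  - exact (Hle a r X Y ltac:(assumption) HX HXY).
  - symmetry. exact (Hle r a Y X ltac:(assumption) HY (eq_sym HXY)).
Qed.

Lemma abs_quotient_ppow p s u a b : 2 <= p ->
  Z.abs u = ppow p a -> Z.abs (s * u) = ppow p b -> exists c, Z.abs s = ppow p c.
Proof.
  intros Hp Ha Hb. rewrite Z.abs_mul, Ha in Hb.
  pose proof (ppow_pos p a ltac:(lia)). pose proof (ppow_pos p b ltac:(lia)).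
  assert (Hab : (a <= b)%nat).
  { destruct (Nat.le_gt_cases a b) as [|Hba]; [assumption|].
    pose proof (ppow_double_lt p b a Hp Hba).
    assert (Z.abs s = 0 \/ 1 <= Z.abs s) as [Hs0|Hs1] by lia; nia. }
  exists (b - a)%nat. apply (Z.mul_reg_r _ _ (ppow p a)); [lia|].
  rewrite <- ppow_add, Nat.sub_add by exact Hab. exact Hb.
Qed.

Lemma divide_abs_lt_eq0 d n : (d | n) -> Z.abs n < Z.abs d -> n = 0.
Proof.
  intros Hd Hlt. destruct (Z.eq_dec n 0) as [|Hn]; [assumption|].
  apply Z.divide_abs_l, Z.divide_abs_r, Z.divide_pos_le in Hd; lia.
Qed.

Lemma geometric_sum (u : Z) (j : nat) : 1 <= u ->
  exists S, S * (u - 1) = u ^ Z.of_nat j - 1 /\ (u - 1 | S - Z.of_nat j) /\ Z.of_nat j <= S.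
Proof.
  intros Hu. induction j as [|j [S [HS [Hd Hj]]]].
  - exists 0. change (Z.of_nat 0) with 0. rewrite Z.pow_0_r.
    split; [|split]; [lia | apply Z.divide_0_r | lia].
  - exists (u * S + 1). rewrite Nat2Z.inj_succ, Z.pow_succ_r by lia.
    split; [|split]; [| |nia].
    { replace (u * u ^ Z.of_nat j) with (u * (S * (u - 1) + 1)) by (rewrite HS; ring). ring. }
    replace (u * S + 1 - Z.succ (Z.of_nat j)) with ((u - 1) * S + (S - Z.of_nat j)) by ring.
    apply Z.divide_add_r; [apply Z.divide_factor_l | exact Hd].
Qed.

Lemma sub_one_divide_pow_sub_one (u : Z) (j : nat) : 1 <= u -> (u - 1 | u ^ Z.of_nat j - 1).
Proof. intros Hu. destruct (geometric_sum u j Hu) as [S [HS _]]. exists S. lia. Qed.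

Lemma ppow_sub_one_divide p m n : 2 <= p -> (1 <= m)%nat ->
  (ppow p m - 1 | ppow p n - 1) -> exists j, n = (m * j)%nat.
Proof.
  intros Hp Hm Hd.
  pose proof (Nat.div_mod n m ltac:(lia)) as Hn. pose proof (Nat.mod_upper_bound n m ltac:(lia)).
  set (j := (n / m)%nat) in *. set (r := (n mod m)%nat) in *.
  exists j.
  assert (Hr : (ppow p m - 1 | ppow p r - 1)).
  { replace (ppow p r - 1)
      with ((ppow p n - 1) - ppow p r * (ppow p m ^ Z.of_nat j - 1))
      by (rewrite Hn, ppow_add, ppow_mul; ring).
    apply Z.divide_sub_r; [exact Hd|]. apply Z.divide_mul_r, sub_one_divide_pow_sub_one.
    pose proof (ppow_pos p m); lia. }
  destruct r as [|r]; [lia|].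
  pose proof (ppow_double_lt p (S r) m Hp ltac:(lia)). pose proof (ppow_ge_base p (S r) Hp ltac:(lia)).
  apply Z.divide_pos_le in Hr; lia.
Qed.

Lemma exists_pow_sub_one_divide (a c : Z) : 0 < a -> c <> 0 -> rel_prime a c ->
  exists k, (1 <= k)%nat /\ (c | a ^ Z.of_nat k - 1).
Proof.
  intros Ha Hc [_ _ Hgcd].
  assert (Hco : forall d, Nat.divide d (Z.to_nat a) -> Nat.divide d (Z.to_nat (Z.abs c)) -> d = 1%nat).
  { intros d [q1 Hq1] [q2 Hq2].
    assert (Hd : (Z.of_nat d | 1)).
    { apply Hgcd.
      - exists (Z.of_nat q1). lia.
      - apply Z.divide_abs_r. exists (Z.of_nat q2). lia. }
    apply Z.divide_1_r in Hd. lia. }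
  destruct (EulerNat.exists_pow_sub_one_dvdn (Z.to_nat a) (Z.to_nat (Z.abs c)) ltac:(lia) ltac:(lia) Hco)
    as [k [Hk [H1 [q Hq]]]].
  exists k. split; [lia|]. apply Z.divide_abs_l. exists (Z.of_nat q).
  apply (f_equal Z.of_nat) in Hq.
  rewrite Nat2Z.inj_sub, Nat2Z.inj_pow, Nat2Z.inj_mul, !Z2Nat.id in Hq by lia. lia.
Qed.

Fixpoint shift (n : nat) (t : term) : term :=
  match t with
  | tvar k => tvar (n + k)
  | tadd a b => tadd (shift n a) (shift n b)
  | t => t
  end.

Lemma eval_shift0 {M} (z o : M) add e t : eval_term z o add e (shift 0 t) = eval_term z o add e t.
Proof. induction t; simpl; congruence. Qed.

Lemma eval_shiftS {M} (z o : M) add a e n t :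
  eval_term z o add (scons a e) (shift (S n) t) = eval_term z o add e (shift n t).
Proof. induction t; simpl; congruence. Qed.

Fixpoint term_fv_lt (k : nat) (t : term) : bool :=
  match t with
  | tvar n => Nat.ltb n k
  | tadd a b => term_fv_lt k a && term_fv_lt k b
  | _ => true
  end.

Fixpoint fv_lt {U B} (k : nat) (f : pef U B) : bool :=
  match f with
  | Feq a b | Fbin _ a b => term_fv_lt k a && term_fv_lt k b
  | Fun _ a => term_fv_lt k a
  | Fand f g | For f g => fv_lt k f && fv_lt k g
  | Fex f => fv_lt (S k) f
  end.

Lemma eval_coincide {M} (z o : M) add k e e' t : term_fv_lt k t = true ->
  (forall n, (n < k)%nat -> e n = e' n) -> eval_term z o add e t = eval_term z o add e' t.
Proof.
  intros Ht He. induction t; simpl in *; auto.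
  - apply He, Nat.ltb_lt, Ht.
  - apply andb_prop in Ht as [H1 H2]. rewrite IHt1, IHt2; auto.
Qed.

Lemma sat_coincide {M U B} (z o : M) add iu ib (f : pef U B) : forall k e e', fv_lt k f = true ->
  (forall n, (n < k)%nat -> e n = e' n) -> (sat z o add iu ib e f <-> sat z o add iu ib e' f).
Proof.
  induction f; intros k e e' Hf He; simpl in *;
    repeat match goal with H : (_ && _)%bool = true |- _ => apply andb_prop in H as [? ?] end.
  - rewrite !(eval_coincide z o add k e e'); tauto.
  - rewrite !(eval_coincide z o add k e e'); tauto.
  - rewrite !(eval_coincide z o add k e e'); tauto.
  - rewrite (IHf1 k e e'), (IHf2 k e e'); tauto.
  - rewrite (IHf1 k e e'), (IHf2 k e e'); tauto.
  - assert (Hs : forall a n, (n < S k)%nat -> scons a e n = scons a e' n)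
      by (intros a [|n] Hn; simpl; auto with arith).
    split; intros [a Ha]; exists a;
      [rewrite <- (IHf (S k) (scons a e) (scons a e')) | rewrite (IHf (S k) (scons a e) (scons a e'))]; auto.
Qed.

(** * Multiplication in N_p *)

Definition ppow_rel (p x y : Z) : Prop := exists k, y = x * ppow p k \/ x = y * ppow p k.

Lemma divp_nonneg p x y : 0 < p -> 0 <= x -> 0 <= y -> divp p x y <-> ppow_rel p x y.
Proof. intros Hp Hx Hy. rewrite divp_abs by exact Hp. rewrite !Z.abs_eq by lia. reflexivity. Qed.

Lemma ppow_rel_one p u : 0 < p -> 0 <= u -> ppow_rel p 1 u <-> exists a, u = ppow p a.
Proof.
  intros Hp Hu. split.
  - intros [k [H|H]]; [exists k; lia|]. exists 0%nat. pose proof (ppow_pos p k Hp). rewrite ppow_0. nia.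
  - intros [a Ha]. exists a. left. lia.
Qed.

Lemma ppow_rel_le p x y : 2 <= p -> 0 <= x <= y -> ppow_rel p x y -> exists k, y = x * ppow p k.
Proof.
  intros Hp Hxy [k [H|H]]; [exists k; exact H|]. exists 0%nat. rewrite ppow_0.
  destruct k as [|k]; [rewrite ppow_0 in H; lia|].
  pose proof (ppow_ge_base p (S k) Hp ltac:(lia)). nia.
Qed.

Lemma mul_ppow_core p x a s t : prime p -> 1 <= x -> ~ (p | x) ->
  x * ppow p s + ppow p a = (x + 1) * ppow p t -> ppow p a = ppow p s.
Proof.
  intros Hp Hx Hpx H. pose proof (prime_ge_2 p Hp) as Hp2. pose proof (ppow_pos p a).
  destruct (Nat.lt_total t s) as [Hts|[->|Hst]].
  - pose proof (ppow_double_lt p t s Hp2 Hts). pose proof (ppow_pos p t). nia.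
  - lia.
  - exfalso. replace t with (s + S (t - S s))%nat in H by lia.
    set (c := S (t - S s)) in H. rewrite ppow_add in H.
    assert (Hpc : (p | ppow p c)) by (apply base_divide_ppow; lia).
    assert (HY : ppow p a * 1 = ppow p s * ((x + 1) * ppow p c - x)) by lia.
    apply ppow_coprime_cancel in HY; auto.
    + pose proof (ppow_ge_base p c Hp2 ltac:(lia)). nia.
    + intros H1. apply prime_ge_2 in Hp. apply Z.divide_1_r in H1. lia.
    + intros HpY. apply Hpx. replace x with ((x + 1) * ppow p c - ((x + 1) * ppow p c - x)) by ring.
      apply Z.divide_sub_r; [apply Z.divide_mul_r|]; assumption.
Qed.

Definition mul_ppow_test (p x u w : Z) : Prop :=
  ppow_rel p 1 u /\ ppow_rel p x w /\ ppow_rel p (x + 1) (w + u) /\ x <= w.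

Lemma mul_ppow_test_sound p x u w : prime p -> 1 <= x -> ~ (p | x) -> 0 <= u ->
  mul_ppow_test p x u w -> w = x * u.
Proof.
  intros Hp Hx Hpx Hu [Hu1 [Hxw [Hxw1 Hle]]]. pose proof (prime_ge_2 p Hp).
  apply ppow_rel_one in Hu1 as [a ->]; [|lia|lia]. pose proof (ppow_pos p a).
  apply ppow_rel_le in Hxw as [s ->]; [|lia|lia].
  apply ppow_rel_le in Hxw1 as [t Ht]; [|lia|lia].
  rewrite (mul_ppow_core p x a s t); auto.
Qed.

Lemma mul_ppow_test_complete p x a : 0 < p -> 0 <= x ->
  mul_ppow_test p x (ppow p a) (x * ppow p a).
Proof.
  intros Hp Hx. pose proof (ppow_pos p a Hp).
  repeat split; try (exists a; left; ring). nia.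
Qed.

(* Of [x] and [x + 1] at least one is prime to [p]; the test at that one forces [w = x * u]. *)
Lemma mul_ppow_sound p x u w : prime p -> 0 <= x -> 0 <= u ->
  mul_ppow_test p x u w -> mul_ppow_test p (x + 1) u (w + u) ->
  (exists a, u = ppow p a) /\ w = x * u.
Proof.
  intros Hp Hx Hu T0 T1. pose proof (prime_ge_2 p Hp).
  split; [apply ppow_rel_one; [lia | lia | apply T0]|].
  destruct (Zdivide_dec p x) as [Hpx|Hpx].
  - assert (Hpx1 : ~ (p | x + 1)) by (apply prime_ndivide_add_unit; auto).
    apply mul_ppow_test_sound in T1; auto; lia.
  - assert (x <> 0) by (intros ->; apply Hpx, Z.divide_0_r).
    apply mul_ppow_test_sound in T0; auto; lia.
Qed.

Definition exp_congr (p k u v : Z) : Prop :=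
  (exists m, (1 <= m)%nat /\ u = ppow p m) /\ k + 2 <= u /\
  exists j : nat, v = u ^ Z.of_nat j /\ (u - 1 | Z.of_nat j - k).

(* [A] is the geometric sum [1 + u + ... + u^(j-1)], which is [j] modulo [u - 1]. *)
Lemma exp_congr_iff_witness p k u v : 2 <= p -> 0 <= k ->
  exp_congr p k u v <->
  (exists a, u = ppow p a) /\ (exists b, v = ppow p b) /\ k + 2 <= u /\
  exists A q, 0 <= A /\ 0 <= q /\ A * u + 1 = A + v /\ A + q = k + q * u.
Proof.
  intros Hp Hk. split.
  - intros [[m [Hm ->]] [Hku [j [-> [c Hc]]]]]. pose proof (ppow_pos p m).
    destruct (geometric_sum (ppow p m) j ltac:(lia)) as [S [HS [[d Hd] Hj]]].
    assert (0 <= c) by nia.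
    split; [exists m; reflexivity|]. split; [exists (m * j)%nat; symmetry; apply ppow_mul|].
    split; [exact Hku|]. exists S, (c + d). nia.
  - intros [[a Hu] [[b Hv] [Hku [A [q [HA [Hq [HAv HAq]]]]]]]].
    assert (Ha : (1 <= a)%nat) by (destruct a; [rewrite ppow_0 in Hu|]; lia).
    destruct (ppow_sub_one_divide p a b Hp Ha) as [j ->]; [exists A; lia|].
    rewrite ppow_mul, <- Hu in Hv.
    destruct (geometric_sum u j ltac:(lia)) as [S [HS [Hd _]]].
    assert (S = A) as -> by (apply (Z.mul_reg_r _ _ (u - 1)); lia).
    split; [exists a; auto|]. split; [exact Hku|]. exists j. split; [exact Hv|].
    replace (Z.of_nat j - k) with ((A - k) - (A - Z.of_nat j)) by ring.
    apply Z.divide_sub_r; [exists q; lia | exact Hd].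
Qed.

(* [v = u^j] and [w = v^j' = u^(j j')], so [z = j j' = x y] modulo [u - 1], and both sides are
   smaller than [u - 1]. *)
Lemma exp_congr_mul p x y z u v w : 0 <= x -> 0 <= y -> 0 <= z -> x * y + 2 <= u ->
  exp_congr p x u v -> exp_congr p y v w -> exp_congr p z u w -> z = x * y.
Proof.
  intros Hx Hy Hz Hxy [_ [Hxu [j1 [Hv H1]]]] [_ [Hyv [j2 [Hw H2]]]] [_ [Hzu [j3 [Hw' H3]]]].
  assert (Hj : j3 = (j1 * j2)%nat).
  { rewrite Hv, <- Z.pow_mul_r, <- Nat2Z.inj_mul in Hw by lia.
    rewrite Hw in Hw'. apply Z.pow_inj_r in Hw'; lia. }
  assert (Huv : (u - 1 | v - 1)) by (rewrite Hv; apply sub_one_divide_pow_sub_one; lia).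
  assert (Hd : (u - 1 | z - x * y)).
  { replace (z - x * y)
      with (- (Z.of_nat j3 - z) + Z.of_nat j1 * (Z.of_nat j2 - y) + y * (Z.of_nat j1 - x))
      by (rewrite Hj, Nat2Z.inj_mul; ring).
    apply Z.divide_add_r; [apply Z.divide_add_r|].
    - apply Z.divide_opp_r, H3.
    - apply Z.divide_mul_r. eapply Z.divide_trans; eassumption.
    - apply Z.divide_mul_r, H1. }
  apply divide_abs_lt_eq0 in Hd; lia.
Qed.

Notation evN e t := (eval_term 0%nat 1%nat Nat.add e t).

Lemma satN_ex p e f : satN p e (Fex f) <-> exists a, satN p (scons a e) f.
Proof. reflexivity. Qed.
Lemma satN_and p e f g : satN p e (Fand f g) <-> satN p e f /\ satN p e g.
Proof. reflexivity. Qed.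
Lemma satN_or p e f g : satN p e (For f g) <-> satN p e f \/ satN p e g.
Proof. reflexivity. Qed.
Lemma satN_eq p e a b : satN p e (Feq a b) <-> evN e a = evN e b.
Proof. reflexivity. Qed.
Lemma satN_R p e a b : 0 < p ->
  satN p e (Fbin sym_R a b) <-> ppow_rel p (Z.of_nat (evN e a)) (Z.of_nat (evN e b)).
Proof. intros Hp. apply divp_nonneg; lia. Qed.

Definition le_f (a b : term) : formN := Fex (Feq (tadd (shift 1 a) (tvar 0)) (shift 1 b)).

Lemma satN_le_f p e a b : satN p e (le_f a b) <-> (evN e a <= evN e b)%nat.
Proof.
  unfold le_f. rewrite satN_ex. setoid_rewrite satN_eq. simpl.
  setoid_rewrite eval_shiftS. setoid_rewrite eval_shift0.
  split; [intros [c H]; lia | intros H; exists (evN e b - evN e a)%nat; lia].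
Qed.

Definition mul_ppow_test_f (x u w : term) : formN :=
  Fand (Fbin sym_R tone u) (Fand (Fbin sym_R x w)
    (Fand (Fbin sym_R (tadd x tone) (tadd w u)) (le_f x w))).

Definition mul_ppow_f (x u w : term) : formN :=
  Fand (mul_ppow_test_f x u w) (mul_ppow_test_f (tadd x tone) u (tadd w u)).

Lemma satN_mul_ppow_test_f p e x u w : 0 < p -> satN p e (mul_ppow_test_f x u w) <->
  mul_ppow_test p (Z.of_nat (evN e x)) (Z.of_nat (evN e u)) (Z.of_nat (evN e w)).
Proof.
  intros Hp. unfold mul_ppow_test_f, mul_ppow_test.
  rewrite !satN_and, !satN_R, satN_le_f by exact Hp. simpl. rewrite !Nat2Z.inj_add, Nat2Z.inj_le.
  reflexivity.
Qed.

Lemma satN_mul_ppow_f p e x u w : prime p -> satN p e (mul_ppow_f x u w) <->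
  (exists a, Z.of_nat (evN e u) = ppow p a) /\ evN e w = (evN e x * evN e u)%nat.
Proof.
  intros Hp. pose proof (prime_ge_2 p Hp).
  unfold mul_ppow_f. rewrite satN_and, !satN_mul_ppow_test_f by lia. simpl. rewrite !Nat2Z.inj_add.
  split.
  - intros [T0 T1]. destruct (mul_ppow_sound p _ _ _ Hp (Nat2Z.is_nonneg _) (Nat2Z.is_nonneg _) T0 T1)
      as [Hu Hw]. split; [exact Hu | lia].
  - intros [[a Ha] ->]. rewrite Nat2Z.inj_mul, Ha.
    replace (Z.of_nat (evN e x) * ppow p a + ppow p a) with ((Z.of_nat (evN e x) + 1) * ppow p a) by ring.
    split; apply mul_ppow_test_complete; lia.
Qed.

Definition exp_congr_f (k u v : term) : formN :=
  let k := shift 4 k in let u := shift 4 u in let v := shift 4 v in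
  let A := tvar 3 in let B := tvar 2 in let q := tvar 1 in let C := tvar 0 in
  Fex (Fex (Fex (Fex
    (Fand (mul_ppow_f A u B) (Fand (Feq (tadd B tone) (tadd A v))
    (Fand (mul_ppow_f q u C) (Fand (Feq (tadd A q) (tadd k C))
    (Fand (Fbin sym_R tone v) (le_f (tadd k (tadd tone tone)) u))))))))).

Lemma satN_exp_congr_f p e k u v : prime p -> satN p e (exp_congr_f k u v) <->
  exp_congr p (Z.of_nat (evN e k)) (Z.of_nat (evN e u)) (Z.of_nat (evN e v)).
Proof.
  intros Hp. pose proof (prime_ge_2 p Hp). unfold exp_congr_f.
  repeat setoid_rewrite satN_ex. repeat setoid_rewrite satN_and.
  setoid_rewrite (fun e x u w => satN_mul_ppow_f p e x u w Hp).
  setoid_rewrite satN_eq. setoid_rewrite satN_le_f. setoid_rewrite (fun e a b => satN_R p e a b ltac:(lia)).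
  simpl. repeat setoid_rewrite eval_shiftS. setoid_rewrite eval_shift0.
  rewrite exp_congr_iff_witness by lia.
  set (K := evN e k). set (U := evN e u). set (V := evN e v). split.
  - intros [A [B [q [C [[Ha HB] [HAB [[_ HC] [HAC [Hv Hk]]]]]]]]].
    split; [exact Ha|]. split; [apply ppow_rel_one in Hv; [exact Hv | lia | lia]|]. split; [lia|].
    exists (Z.of_nat A), (Z.of_nat q). lia.
  - intros [Ha [Hv [Hk [A [q [HA [Hq [HAv HAq]]]]]]]].
    exists (Z.to_nat A), (Z.to_nat A * U)%nat, (Z.to_nat q), (Z.to_nat q * U)%nat.
    repeat split; auto; try lia. apply ppow_rel_one; [lia | lia | exact Hv].
Qed.

Lemma exp_congr_ppow p (k m : nat) : 2 <= p -> (1 <= m)%nat -> Z.of_nat k + 2 <= ppow p m ->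
  exp_congr p (Z.of_nat k) (ppow p m) (ppow p (m * k)).
Proof.
  intros Hp Hm Hk. split; [exists m; auto|]. split; [exact Hk|].
  exists k. split; [apply ppow_mul | rewrite Z.sub_diag; apply Z.divide_0_r].
Qed.

(* [x * y] is read off as the exponent of [w = u^(x y)] modulo [u - 1], with [u] a power of [p]
   exceeding [x * y + 1]; the auxiliary [t = x * u'] with [u' > y] certifies that bound.  The case
   [x = 0] is split off since then [v = u^x = 1] is too small to carry [y]. *)
Definition mulN_f : formN :=
  let x := tvar 5 in let y := tvar 6 in let z := tvar 7 in
  let u := tvar 4 in let v := tvar 3 in let w := tvar 2 in let u' := tvar 1 in let t := tvar 0 in
  For (Fand (Feq (tvar 0) tzero) (Feq (tvar 2) tzero))
    (Fex (Fex (Fex (Fex (Fex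
      (Fand (exp_congr_f x u v) (Fand (exp_congr_f y v w) (Fand (exp_congr_f z u w)
      (Fand (le_f (tadd y tone) u') (Fand (mul_ppow_f x u' t)
        (le_f (tadd t (tadd tone tone)) u))))))))))).

Lemma satN_mulN_f p e : prime p -> satN p e mulN_f <-> e 2%nat = (e 0%nat * e 1%nat)%nat.
Proof.
  intros Hp. pose proof (prime_ge_2 p Hp). unfold mulN_f.
  rewrite satN_or. repeat setoid_rewrite satN_ex. repeat setoid_rewrite satN_and.
  setoid_rewrite (fun e x u w => satN_mul_ppow_f p e x u w Hp).
  setoid_rewrite (fun e k u v => satN_exp_congr_f p e k u v Hp).
  setoid_rewrite satN_eq. setoid_rewrite satN_le_f. simpl.
  set (x := e 0%nat). set (y := e 1%nat). set (z := e 2%nat). split.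
  - intros [[-> ->]|[u [v [w [u' [t [Cx [Cy [Cz [Hyu [[_ Ht] Htu]]]]]]]]]]]; [reflexivity|].
    assert (x * (y + 1) <= x * u')%nat by (apply Nat.mul_le_mono_l; lia).
    assert (Hb : Z.of_nat x * Z.of_nat y + 2 <= Z.of_nat u) by (rewrite <- Nat2Z.inj_mul; lia).
    apply Nat2Z.inj. rewrite Nat2Z.inj_mul.
    apply (exp_congr_mul p _ _ _ _ _ _ (Nat2Z.is_nonneg x) (Nat2Z.is_nonneg y) (Nat2Z.is_nonneg z)
      Hb Cx Cy Cz).
  - intros Hz. destruct (Nat.eq_dec x 0) as [Hx|Hx]; [left; lia|right].
    destruct (ppow_nat p y ltac:(lia)) as [u' Hu'].
    pose proof (ppow_gt_index p y ltac:(lia)) as Hyu'. rewrite <- Hu' in Hyu'.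
    set (M := (x * u' + 2)%nat).
    destruct (ppow_nat p M ltac:(lia)) as [u Hu].
    destruct (ppow_nat p (M * x) ltac:(lia)) as [v Hv].
    destruct (ppow_nat p (M * x * y) ltac:(lia)) as [w Hw].
    pose proof (ppow_gt_index p M ltac:(lia)) as HMu.
    pose proof (ppow_gt_index p (M * x) ltac:(lia)) as HMv.
    exists u, v, w, u', (x * u')%nat. rewrite Hu, Hv, Hw.
    split; [|split; [|split; [|split; [|split; [split|]]]]].
    + apply exp_congr_ppow; nia.
    + apply exp_congr_ppow; nia.
    + rewrite Hz, <- Nat.mul_assoc. apply exp_congr_ppow; nia.
    + lia.
    + exists y. exact Hu'.
    + reflexivity.
    + lia.
Qed.

(** * Multiplication in Z_p *)

Fixpoint relativize (f : formN) : formZ :=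
  match f with
  | Feq a b => Feq a b
  | Fun u _ => match u with end
  | Fbin _ a b => Fbin sym_R a b
  | Fand f g => Fand (relativize f) (relativize g)
  | For f g => For (relativize f) (relativize g)
  | Fex f => Fex (Fand (Fun sym_pos (tvar 0)) (relativize f))
  end.

Lemma eval_of_nat (e : nat -> nat) (e' : nat -> Z) t : (forall n, e' n = Z.of_nat (e n)) ->
  eval_term 0 1 Z.add e' t = Z.of_nat (evN e t).
Proof. intros He. induction t; simpl; auto. rewrite IHt1, IHt2, Nat2Z.inj_add. reflexivity. Qed.

Lemma satN_relativize p (f : formN) : forall e e', (forall n, e' n = Z.of_nat (e n)) ->
  satN p e f <-> satZ p e' (relativize f).
Proof.
  unfold satN, satZ.
  induction f as [a b| [] | r a b | f IHf g IHg | f IHf g IHg | f IHf]; intros e e' He; simpl.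
  - rewrite !(eval_of_nat e e') by exact He. lia.
  - rewrite !(eval_of_nat e e') by exact He. reflexivity.
  - rewrite (IHf e e'), (IHg e e') by exact He. reflexivity.
  - rewrite (IHf e e'), (IHg e e') by exact He. reflexivity.
  - split.
    + intros [a Ha]. exists (Z.of_nat a). split; [lia|].
      apply (IHf (scons a e)); [intros [|n]; simpl; auto | exact Ha].
    + intros [a [Ha0 Ha]]. exists (Z.to_nat a).
      apply (IHf (scons (Z.to_nat a) e) (scons a e')); [intros [|n]; simpl; auto; lia | exact Ha].
Qed.

Lemma satZ_relativize_mulN_f p e a b c : prime p -> 0 <= a -> 0 <= b -> 0 <= c ->
  satZ p (scons a (scons b (scons c e))) (relativize mulN_f) <-> c = a * b.
Proof.
  intros Hp Ha Hb Hc.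
  set (env := scons a (scons b (scons c e))).
  set (env_nat := fun n => Z.to_nat (env n)).
  unfold satZ.
  rewrite (sat_coincide _ _ _ _ _ _ 3 env (fun n => Z.of_nat (env_nat n))) by
    (reflexivity || (intros [|[|[|n]]] Hn; unfold env_nat; simpl; lia)).
  change (satZ p (fun n => Z.of_nat (env_nat n)) (relativize mulN_f) <-> c = a * b).
  rewrite <- (satN_relativize p mulN_f env_nat) by reflexivity.
  rewrite satN_mulN_f by exact Hp. unfold env_nat; simpl. lia.
Qed.

Definition mulZ_f : formZ :=
  let a := tvar 0 in let b := tvar 1 in let c := tvar 2 in
  let x := tvar 3 in let y := tvar 4 in let z := tvar 5 in
  let neg s t := Feq (tadd s t) tzero in
  Fex (Fex (Fex (Fand (Fun sym_pos a) (Fand (Fun sym_pos b) (Fand (Fun sym_pos c)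
    (Fand
      (For (Fand (Feq x a) (Fand (Feq y b) (Feq z c)))
      (For (Fand (neg x a) (Fand (neg y b) (Feq z c)))
      (For (Fand (Feq x a) (Fand (neg y b) (neg z c)))
           (Fand (neg x a) (Fand (Feq y b) (neg z c))))))
      (relativize mulN_f))))))).

Lemma satZ_mulZ_f p e : prime p -> satZ p e mulZ_f <-> e 2%nat = (e 0%nat * e 1%nat)%Z.
Proof.
  intros Hp. unfold mulZ_f. unfold satZ at 1. cbn [sat eval_term scons].
  split.
  - intros [c [b [a [Ha [Hb [Hc [Hs Hm]]]]]]].
    apply satZ_relativize_mulN_f in Hm as ->; auto.
    destruct Hs as [[H1 [H2 H3]]|[[H1 [H2 H3]]|[[H1 [H2 H3]]|[H1 [H2 H3]]]]]; nia.
  - intros Hz. exists (Z.abs (e 2%nat)), (Z.abs (e 1%nat)), (Z.abs (e 0%nat)).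
    split; [lia|split; [lia|split; [lia|split]]].
    + rewrite Hz, Z.abs_mul. destruct (Z.le_ge_cases 0 (e 0%nat)), (Z.le_ge_cases 0 (e 1%nat)).
      * left. lia.
      * right; right; left. nia.
      * right; right; right. nia.
      * right; left. nia.
    + apply satZ_relativize_mulN_f; auto; lia.
Qed.

(** * Multiplication in D_p *)

Lemma prime_ndivide_ppow_shift p c s d : prime p -> (1 <= c)%nat ->
  Z.abs s = ppow p c -> Z.abs d = 1 -> ~ (p | Z.abs (s + d)).
Proof.
  intros Hp Hc Hs Hd. rewrite Z.divide_abs_r. apply prime_ndivide_add_unit; auto.
  apply Z.divide_abs_r. rewrite Hs. apply base_divide_ppow, Hc.
Qed.

Definition sq_ppow (p u v : Z) : Prop :=
  v = u * u /\ exists a, (1 <= a)%nat /\ Z.abs u = ppow p a.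

(* Write [v = s u] with [|s|] a power of [p].  Both [v + u = (s + 1) u] and [v - u = (s - 1) u]
   carry the [p]-part of [u] only, which forces [|s + 1| = |u + 1|], [|s - 1| = |u - 1|],
   hence [s = u]. *)
Lemma sq_ppow_sound p u v : prime p ->
  divp p 1 u -> 2 <= Z.abs u -> divp p 1 v -> (u | v) ->
  (u + 1 | v + u) -> divp p (u + 1) (v + u) -> (u - 1 | v - u) -> divp p (u - 1) (v - u) ->
  sq_ppow p u v.
Proof.
  intros Hp Hu1 Hu2 Hv1 [s Hs] Hd1 Hr1 Hd2 Hr2. pose proof (prime_ge_2 p Hp).
  destruct (divp_one p u ltac:(lia) Hu1) as [a Ha].
  destruct (divp_one p v ltac:(lia) Hv1) as [b Hb].
  assert (Ha1 : (1 <= a)%nat) by (destruct a; [rewrite ppow_0 in Ha|]; lia).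
  pose proof (ppow_pos p a ltac:(lia)).
  rewrite Hs in Hb. destruct (abs_quotient_ppow p s u a b ltac:(lia) Ha Hb) as [c Hsc].
  destruct (divp_divide p (u + 1) (v + u) ltac:(lia) ltac:(lia) Hd1 Hr1) as [r Hr].
  destruct (divp_divide p (u - 1) (v - u) ltac:(lia) ltac:(lia) Hd2 Hr2) as [r' Hr'].
  pose proof (ppow_pos p r ltac:(lia)). pose proof (ppow_pos p r' ltac:(lia)).
  destruct c as [|c].
  - exfalso. rewrite ppow_0 in Hsc. destruct (Z.abs_spec s) as [[_ Es]|[_ Es]]; nia.
  - assert (Hplus : Z.abs (s + 1) = Z.abs (u + 1)).
    { apply (ppow_coprime_cancel p a r); [exact Hp | | |].
      - exact (prime_ndivide_ppow_shift p (S c) s 1 Hp ltac:(lia) Hsc eq_refl).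
      - exact (prime_ndivide_ppow_shift p a u 1 Hp Ha1 Ha eq_refl).
      - rewrite (Z.mul_comm (ppow p r)), <- Hr, <- Ha, <- Z.abs_mul, Hs. f_equal. ring. }
    assert (Hminus : Z.abs (s + -1) = Z.abs (u + -1)).
    { apply (ppow_coprime_cancel p a r'); [exact Hp | | |].
      - exact (prime_ndivide_ppow_shift p (S c) s (-1) Hp ltac:(lia) Hsc eq_refl).
      - exact (prime_ndivide_ppow_shift p a u (-1) Hp Ha1 Ha eq_refl).
      - replace (u + -1) with (u - 1) by ring.
        rewrite (Z.mul_comm (ppow p r')), <- Hr', <- Ha, <- Z.abs_mul, Hs. f_equal. ring. }
    split; [|exists a; auto]. assert (s = u) as <- by lia. exact Hs.
Qed.

Lemma sq_ppow_complete p u v : 2 <= p -> sq_ppow p u v ->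
  divp p 1 u /\ 2 <= Z.abs u /\ divp p 1 v /\ (u | v) /\
  (u + 1 | v + u) /\ divp p (u + 1) (v + u) /\ (u - 1 | v - u) /\ divp p (u - 1) (v - u).
Proof.
  intros Hp2 [-> [a [Ha Hu]]]. pose proof (ppow_ge_base p a Hp2 Ha). assert (Hp : 0 < p) by lia.
  repeat split.
  - apply (divp_of_abs p 1 u a Hp). lia.
  - lia.
  - apply (divp_of_abs p 1 (u * u) (a + a) Hp). change (Z.abs 1) with 1.
    rewrite ppow_add, Z.abs_mul, Hu. ring.
  - exists u. ring.
  - exists u. ring.
  - apply (divp_of_abs p _ _ a Hp). rewrite <- Hu, <- Z.abs_mul. f_equal. ring.
  - exists u. ring.
  - apply (divp_of_abs p _ _ a Hp). rewrite <- Hu, <- Z.abs_mul. f_equal. ring.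
Qed.

Definition bound_witness (p K U : Z) : Prop :=
  exists z m, divp p K z /\ (K | z) /\ (z + 1 | m) /\ m + 1 = U /\ 2 <= Z.abs U.

Lemma bound_witness_sound p K U : 0 < p -> bound_witness p K U ->
  Z.abs K <= Z.abs U + 2 /\ 2 <= Z.abs U.
Proof.
  intros Hp [z [m [Hr [HKz [Hm [<- HU]]]]]].
  assert (Hz : Z.abs K <= Z.abs z).
  { destruct (Z.eq_dec K 0) as [->|HK]; [lia|].
    destruct (divp_divide p K z Hp HK HKz Hr) as [k Hk]. pose proof (ppow_pos p k Hp). nia. }
  apply Z.divide_abs_l, Z.divide_abs_r, Z.divide_pos_le in Hm; lia.
Qed.

(* Euler's theorem gives [K p + 1 | p^n - 1] for some [n >= 1]. *)
Lemma bound_witness_ppow p K : prime p -> exists n, (1 <= n)%nat /\ bound_witness p K (ppow p n).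
Proof.
  intros Hp. pose proof (prime_ge_2 p Hp).
  assert (Hndiv : ~ (p | K * p + 1)) by (apply prime_ndivide_add_unit; auto; apply Z.divide_factor_r).
  destruct (exists_pow_sub_one_divide p (K * p + 1)) as [n [Hn Hdiv]]; [lia | | |].
  { intros E. apply Hndiv. rewrite E. apply Z.divide_0_r. }
  { apply prime_rel_prime; assumption. }
  pose proof (ppow_ge_base p n ltac:(lia) Hn).
  exists n. split; [exact Hn|]. exists (K * p), (ppow p n - 1). repeat split.
  - apply (divp_of_abs p _ _ 1 ltac:(lia)). rewrite Z.abs_mul. unfold ppow; simpl. lia.
  - apply Z.divide_factor_l.
  - exact Hdiv.
  - ring.
  - lia.
Qed.

Lemma square_of_divide_bound x y u0 u1 u : 2 <= Z.abs u0 -> 2 <= Z.abs u1 ->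
  Z.abs (3 * x) <= Z.abs u0 + 2 -> Z.abs (3 * y) <= Z.abs u1 + 2 ->
  Z.abs (2 * (u0 * u0) + 2 * (u1 * u1)) <= Z.abs u + 2 -> (x - u | y - u * u) -> y = x * x.
Proof.
  intros H0 H1 Hx Hy Hu Hd.
  assert (Hd' : (x - u | y - x * x)).
  { replace (y - x * x) with ((y - u * u) - (x - u) * (x + u)) by ring.
    apply Z.divide_sub_r; [exact Hd | apply Z.divide_factor_l]. }
  rewrite <- !(Z.abs_square x), <- !(Z.abs_square u0), <- !(Z.abs_square u1) in *.
  rewrite Z.abs_mul in Hx, Hy.
  apply divide_abs_lt_eq0 in Hd'; [lia|].
  assert (Z.abs x + 1 <= Z.abs u0) by lia. assert (Z.abs y + 1 <= Z.abs u1) by lia.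
  nia.
Qed.

Notation evZ e t := (eval_term 0 1 Z.add e t).

Lemma satD_ex p e f : satD p e (Fex f) <-> exists a, satD p (scons a e) f.
Proof. reflexivity. Qed.
Lemma satD_and p e f g : satD p e (Fand f g) <-> satD p e f /\ satD p e g.
Proof. reflexivity. Qed.
Lemma satD_eq p e a b : satD p e (Feq a b) <-> evZ e a = evZ e b.
Proof. reflexivity. Qed.
Lemma satD_T p e a : satD p e (Fun sym_T a) <-> 2 <= Z.abs (evZ e a).
Proof. unfold satD; simpl. lia. Qed.
Lemma satD_div p e a b : satD p e (Fbin sym_div a b) <-> (evZ e a | evZ e b).
Proof. reflexivity. Qed.
Lemma satD_R p e a b : satD p e (Fbin sym_RD a b) <-> divp p (evZ e a) (evZ e b).
Proof. reflexivity. Qed.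

Definition sq_ppow_f (u v : term) : formD :=
  Fand (Fbin sym_RD tone u) (Fand (Fun sym_T u) (Fand (Fbin sym_RD tone v)
  (Fand (Fbin sym_div u v)
  (Fand (Fbin sym_div (tadd u tone) (tadd v u)) (Fand (Fbin sym_RD (tadd u tone) (tadd v u))
  (Fex (Fex (Fand (Feq (tadd (tvar 1) tone) (shift 2 u)) (Fand (Feq (tadd (tvar 0) (shift 2 u)) (shift 2 v))
    (Fand (Fbin sym_div (tvar 1) (tvar 0)) (Fbin sym_RD (tvar 1) (tvar 0)))))))))))).

Lemma satD_sq_ppow_f p e u v : prime p ->
  satD p e (sq_ppow_f u v) <-> sq_ppow p (evZ e u) (evZ e v).
Proof.
  intros Hp. pose proof (prime_ge_2 p Hp). unfold sq_ppow_f.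
  repeat setoid_rewrite satD_and. repeat setoid_rewrite satD_ex. repeat setoid_rewrite satD_and.
  setoid_rewrite satD_eq. setoid_rewrite satD_T. setoid_rewrite satD_div. setoid_rewrite satD_R.
  simpl. repeat setoid_rewrite eval_shiftS. setoid_rewrite eval_shift0.
  split.
  - intros [Hu1 [Hu2 [Hv1 [Huv [Hd1 [Hr1 [d1 [d2 [E1 [E2 [Hd2 Hr2]]]]]]]]]]].
    replace d1 with (evZ e u - 1) in * by lia. replace d2 with (evZ e v - evZ e u) in * by lia.
    apply sq_ppow_sound; assumption.
  - intros Hsq. destruct (sq_ppow_complete p _ _ ltac:(lia) Hsq)
      as [Hu1 [Hu2 [Hv1 [Huv [Hd1 [Hr1 [Hd2 Hr2]]]]]]].
    repeat (split; [assumption|]).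
    exists (evZ e u - 1), (evZ e v - evZ e u). repeat split; auto; ring.
Qed.

Definition bound_f (K u : term) : formD :=
  Fex (Fex (Fand (Fbin sym_RD (shift 2 K) (tvar 1)) (Fand (Fbin sym_div (shift 2 K) (tvar 1))
    (Fand (Fbin sym_div (tadd (tvar 1) tone) (tvar 0)) (Fand (Feq (tadd (tvar 0) tone) (shift 2 u))
      (Fun sym_T (shift 2 u))))))).

Lemma satD_bound_f p e K u : satD p e (bound_f K u) <-> bound_witness p (evZ e K) (evZ e u).
Proof.
  unfold bound_f, bound_witness. repeat setoid_rewrite satD_ex. repeat setoid_rewrite satD_and.
  setoid_rewrite satD_eq. setoid_rewrite satD_T. setoid_rewrite satD_div. setoid_rewrite satD_R.
  simpl. repeat setoid_rewrite eval_shiftS. setoid_rewrite eval_shift0. reflexivity.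
Qed.

(* [y = x^2] iff [x - u | y - u^2] for some [u] with [|u|] large compared to [x] and [y]: then
   [y - x^2] is a multiple of [x - u] too small to be nonzero.  The large [u] ranges over [+-p^n],
   squared by [sq_ppow_f] and bounded from below by [bound_f]. *)
Definition sq_f (x y : term) : formD :=
  let x := shift 8 x in let y := shift 8 y in
  let u0 := tvar 7 in let v0 := tvar 6 in let u1 := tvar 5 in let v1 := tvar 4 in
  let u := tvar 3 in let v := tvar 2 in let d1 := tvar 1 in let d2 := tvar 0 in
  Fex (Fex (Fex (Fex (Fex (Fex (Fex (Fex
    (Fand (sq_ppow_f u0 v0) (Fand (bound_f (tadd x (tadd x x)) u0)
    (Fand (sq_ppow_f u1 v1) (Fand (bound_f (tadd y (tadd y y)) u1)
    (Fand (sq_ppow_f u v) (Fand (bound_f (tadd (tadd v0 v0) (tadd v1 v1)) u)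
    (Fand (Feq (tadd d1 u) x) (Fand (Feq (tadd d2 v) y) (Fbin sym_div d1 d2)))))))))))))))).

Lemma satD_sq_f p e x y : prime p -> satD p e (sq_f x y) <-> evZ e y = evZ e x * evZ e x.
Proof.
  intros Hp. pose proof (prime_ge_2 p Hp). unfold sq_f.
  repeat setoid_rewrite satD_ex. repeat setoid_rewrite satD_and.
  setoid_rewrite (fun e u v => satD_sq_ppow_f p e u v Hp). setoid_rewrite satD_bound_f.
  setoid_rewrite satD_eq. setoid_rewrite satD_div.
  simpl. repeat setoid_rewrite eval_shiftS. setoid_rewrite eval_shift0.
  set (X := evZ e x). set (Y := evZ e y). split.
  - intros [u0 [v0 [u1 [v1 [u [v [d1 [d2 [P0 [B0 [P1 [B1 [P [B [E1 [E2 Hd]]]]]]]]]]]]]]]].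
    destruct P0 as [-> _]. destruct P1 as [-> _]. destruct P as [-> _].
    apply bound_witness_sound in B0 as [B0 U0], B1 as [B1 U1], B as [B _]; try lia.
    apply (square_of_divide_bound X Y u0 u1 u); try lia.
    replace (X - u) with d1 by lia. replace (Y - u * u) with d2 by lia. exact Hd.
  - intros HY.
    assert (Sq : forall k, (1 <= k)%nat -> sq_ppow p (ppow p k) (ppow p k * ppow p k)).
    { intros k Hk. split; [reflexivity|]. exists k. split; [exact Hk|].
      apply Z.abs_eq, Z.lt_le_incl, ppow_pos; lia. }
    destruct (bound_witness_ppow p (X + (X + X)) Hp) as [n0 [Hn0 B0]].
    destruct (bound_witness_ppow p (Y + (Y + Y)) Hp) as [n1 [Hn1 B1]].
    set (u0 := ppow p n0). set (u1 := ppow p n1).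
    destruct (bound_witness_ppow p (u0 * u0 + u0 * u0 + (u1 * u1 + u1 * u1)) Hp) as [n [Hn B]].
    set (u := ppow p n).
    exists u0, (u0 * u0), u1, (u1 * u1), u, (u * u), (X - u), (Y - u * u).
    split; [apply Sq, Hn0|]. split; [exact B0|].
    split; [apply Sq, Hn1|]. split; [exact B1|].
    split; [apply Sq, Hn|]. split; [exact B|].
    split; [ring|]. split; [ring|].
    exists (X + u). rewrite HY. ring.
Qed.

Definition mulD_f : formD :=
  let x := tvar 3 in let y := tvar 4 in let z := tvar 5 in
  let s1 := tvar 2 in let s2 := tvar 1 in let s3 := tvar 0 in
  Fex (Fex (Fex (Fand (sq_f (tadd x y) s1) (Fand (sq_f x s2) (Fand (sq_f y s3)
    (Feq (tadd (tadd z z) (tadd s2 s3)) s1)))))).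

Lemma satD_mulD_f p e : prime p -> satD p e mulD_f <-> e 2%nat = (e 0%nat * e 1%nat)%Z.
Proof.
  intros Hp. unfold mulD_f.
  repeat setoid_rewrite satD_ex. repeat setoid_rewrite satD_and.
  setoid_rewrite (fun e x y => satD_sq_f p e x y Hp). setoid_rewrite satD_eq. simpl.
  split.
  - intros [s1 [s2 [s3 [H1 [H2 [H3 H4]]]]]]. nia.
  - intros Hz. exists ((e 0%nat + e 1%nat) * (e 0%nat + e 1%nat)), (e 0%nat * e 0%nat), (e 1%nat * e 1%nat).
    repeat split; try ring. rewrite Hz. ring.
Qed.

Theorem theorem1p13 :
  (exists mu : formN, forall p : Z, prime p ->
     forall e : nat -> nat, satN p e mu <-> e 2%nat = (e 0%nat * e 1%nat)%nat) /\
  (exists mu : formZ, forall p : Z, prime p ->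
     forall e : nat -> Z, satZ p e mu <-> e 2%nat = (e 0%nat * e 1%nat)%Z) /\
  (exists mu : formD, forall p : Z, prime p ->
     forall e : nat -> Z, satD p e mu <-> e 2%nat = (e 0%nat * e 1%nat)%Z).
Proof.
  split; [|split].
  - exists mulN_f. intros p Hp e. exact (satN_mulN_f p e Hp).
  - exists mulZ_f. intros p Hp e. exact (satZ_mulZ_f p e Hp).
  - exists mulD_f. intros p Hp e. exact (satD_mulD_f p e Hp).
Qed.
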